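(* Let $T = F \cup R$ be a ground ProbLog program (with the conventions in the context) and let $(AAF^T, PS^T, \Vdash^T)$ be the PAA framework corresponding to $T$, where $AAF^T=(Args^T,Att^T)$ is finite and $PS^T=(\mathcal{W}^T,P)$. Then for every ground atom $q$: \begin{enumerate} \item $P_s(q\mid T) = Prob_G(q)$; \item $P_s(q\mid T) \le \sum_{\alpha \in Args^T,\ \alpha \text{ has claim } q} Prob_G(\alpha)$. \end{enumerate}
   Context: \textbf{Logic programs.} A (ground) logic program (LP) is a set of rules $l_0 \leftarrow l_1,\dots,l_m$ ($m\ge 0$), where $l_0$ is a ground atom (the head) and each $l_i$ ($i\ge1$) is a ground atom or a negation-as-failure literal $not\,a$ for a ground atom $a$; if $m=0$ the rule is a fact. For an LP $L$ and ground atom $q$, $L\models q$ means that $q$ is true in the (possibly three-valued) well-founded model of $L$. \textbf{ProbLog.} A ground ProbLog program is $T=F\cup R$ where $R$ is a ground LP and $F$ is a finite set of probabilistic facts $p::l\leftarrow$ with $p\in[0,1]$ and $l$ a ground atom that is not the head of any rule in $R$; each atom $l$ occurs in at most one probabilistic fact. For $F'\subseteq\{l\leftarrow \mid p::l\leftarrow\in F\}$ and $L=F'\cup R$, set $P(L\mid T)=\prod_{l\leftarrow\in F',\,p::l\leftarrow\in F} p\cdot\prod_{l\leftarrow\notin F',\,p::l\leftarrow\in F}(1-p)$. The success probability of a ground atom $q$ is $P_s(q\mid T)=\sum_{L=F'\cup R,\ F'\subseteq\{l\leftarrow\mid p::l\leftarrow\in F\},\ L\models q} P(L\mid T)$. \textbf{Abstract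 argumentation.} An AA framework is a pair $(Args,Att)$ with $Att\subseteq Args\times Args$; $G(\cdot)$ denotes its grounded extension (Dung's semantics). \textbf{ABA.} A flat ABA framework is $\langle\mathcal{L},\mathcal{R},\mathcal{A},\overline{\cdot}\rangle$ with language $\mathcal{L}$, set $\mathcal{R}$ of rules $s_0\leftarrow s_1,\dots,s_m$ ($s_i\in\mathcal{L}$), nonempty assumptions $\mathcal{A}\subseteq\mathcal{L}$ none of which is the head of a rule, and a total contrary map $\overline{\cdot}:\mathcal{A}\to\mathcal{L}$. An argument for claim $s\in\mathcal{L}$ supported by $A\subseteq\mathcal{A}$ and $\mathcal{S}\subseteq\mathcal{R}$, written $A\vdash^{\mathcal{S}} s$, is a finite tree with root labelled $s$, leaves labelled $true$ or by assumptions in $A$, each non-leaf node $s'$ having as children the body elements of one rule in $\mathcal{S}$ with head $s'$ (a single child $true$ if the body is empty), and $\mathcal{S}$ the set of rules so used. Argument $A_1\vdash^{\mathcal{S}_1}s_1$ attacks $A_2\vdash^{\mathcal{S}_2}s_2$ iff $s_1=\overline{a}$ for some $a\in A_2$. The AA framework for the ABA framework is $(Args,Att)$ with all arguments and these attacks. \textbf{ProbLog-ABA.} For $T=F\cup R$, let $HB$ be the set of ground atoms occurring in $T$, $HB^{not}=\{not\,p\mid p\in HB\}$, $\chi$ a fresh symbol, and $\mathcal{F}=\{l\mid (p::l\leftarrow)\in F\}$. The ProbLog-ABA framework corresponding to $T$ has $\mathcal{R}=R$, $\mathcal{L}=HB\cup HB^{not}\cup\{\chi\}$, $\mathcal{A}=HB^{not}\cup\mathcal{F}$,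 $\overline{not\,p}=p$, and $\overline{\phi}=\chi$ for $\phi\in\mathcal{F}$. Let $AAF^T=(Args^T,Att^T)$ be its AA framework. \textbf{PAA framework corresponding to $T$.} It is $(AAF^T,PS^T,\Vdash^T)$ where $\mathcal{W}^T=2^{\mathcal{F}}$, $P(w)=\prod_{l\in w,\,p::l\leftarrow\in F}p\cdot\prod_{l\in\mathcal{F}\setminus w,\,p::l\leftarrow\in F}(1-p)$, and for $\alpha=A\vdash^{\mathcal{S}}s\in Args^T$, $w\Vdash^T\alpha$ iff $A\cap\mathcal{F}\subseteq w$. For $w\in\mathcal{W}^T$, $AAF^T_w=(Args_w,Att_w)$ with $Args_w=\{\alpha\in Args^T\mid w\Vdash^T\alpha\}$ and $Att_w=Att^T\cap(Args_w\times Args_w)$. The grounded probability of an argument is $Prob_G(\alpha)=\sum_{w\in\mathcal{W}^T:\ \alpha\in G(AAF^T_w)}P(w)$, and the grounded probability of a ground query $q$ is $Prob_G(q)=\sum_{w\in\mathcal{W}^T:\ \exists\alpha\in G(AAF^T_w)\text{ with claim }q}P(w)$. *)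

From HB Require Import structures.
From mathcomp Require Import all_boot all_order all_algebra.
From mathcomp Require Import boolp.
From Stdlib Require List.
Set Implicit Arguments. Unset Strict Implicit. Unset Printing Implicit Defensive.
Import Order.TTheory GRing.Theory Num.Theory.
Local Open Scope ring_scope.

Section ProbLogABA.
Variable A : finType.  (* universe of ground atoms *)

(* body literal: an atom a, or the NAF literal  not a *)
Inductive blit := BPos of A | BNeg of A.

Record rule := Rule { rhead : A; rbody : seq blit }.

(* Least model of the Gelfond-Lifschitz reduct L^I (positive program). *)
Definition gl_closed (L : seq rule) (I X : {set A}) : bool :=
  all (fun r =>
    (all (fun b => match b with BPos a => a \in X | BNeg a => a \notin I end) (rbody r))
      ==> (rhead r \in X)) L.

Definition gl (L : seq rule) (I : {set A}) : {set A} :=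
  \bigcap_(X : {set A} | gl_closed L I X) X.

(* Atoms true in the well-founded model (alternating fixpoint:
   least fixpoint of the monotone operator gl L \o gl L). *)
Definition wf_true (L : seq rule) : {set A} :=
  \bigcap_(X : {set A} | gl L (gl L X) \subset X) X.

Definition wf_models (L : seq rule) (q : A) : bool := q \in wf_true L.

(* A ground ProbLog program T = F u R is given by the rules Rr, the set Fs of
   atoms that carry a probabilistic fact, and p l the probability of the fact
   p::l <- for l \in Fs (each atom occurs in at most one fact). *)
Variable R : realFieldType.
Variable Rr : seq rule.
Variable Fs : {set A}.
Variable p : A -> R.

Definition Pw (w : {set A}) : R :=
  (\prod_(l in w) p l) * \prod_(l in Fs :\: w) (1 - p l).

Definition prog_of (w : {set A}) : seq rule :=
  [seq Rule l [::] | l <- enum w] ++ Rr.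

Definition succ_prob (q : A) : R :=
  \sum_(w : {set A} | (w \subset Fs) && wf_models (prog_of w) q) Pw w.

(* language: atoms, NAF literals, chi, plus the auxiliary leaf label true *)
Inductive lit := LAtom of A | LNot of A | LChi | LTrue.

Definition blit_lit (b : blit) : lit :=
  match b with BPos a => LAtom a | BNeg a => LNot a end.

Definition blit_atom (b : blit) : A := match b with BPos a => a | BNeg a => a end.

Definition HB : {set A} :=
  [set a | (a \in Fs) ||
     has (fun r => (rhead r == a) || has (fun b => blit_atom b == a) (rbody r)) Rr].

Definition isAssm (l : lit) : Prop :=
  match l with
  | LNot a => a \in HB
  | LAtom a => a \in Fs
  | _ => False
  end.

Definition contrary (l : lit) : lit :=
  match l with
  | LNot a => LAtom a
  | _ => LChi
  end.

Inductive tree := Tnode of lit & seq tree.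

Definition label (t : tree) : lit := let: Tnode l _ := t in l.

Fixpoint leaves (t : tree) : seq lit :=
  match t with
  | Tnode l ch => if ch is [::] then [:: l] else flatten (map leaves ch)
  end.

Fixpoint valid (t : tree) : Prop :=
  match t with
  | Tnode l ch =>
      (ch = [::] /\ (l = LTrue \/ isAssm l))
      \/ (exists r, List.In r Rr /\ l = LAtom (rhead r) /\
            map label ch = (if rbody r is [::] then [:: LTrue]
                            else map blit_lit (rbody r)) /\
            (fix allv (s : seq tree) : Prop :=
               match s with [::] => True | c :: s' => valid c /\ allv s' end) ch)
  end.

Definition isArg (t : tree) : Prop := valid t /\ label t <> LTrue.

Definition inSupport (a : lit) (t : tree) : Prop := List.In a (leaves t) /\ isAssm a.

Definition attacks (t1 t2 : tree) : Prop :=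
  exists a, inSupport a t2 /\ label t1 = contrary a.

Section Grounded.
Variable X : Type.
Variables (Args : X -> Prop) (Att : X -> X -> Prop).

Definition defended (S : X -> Prop) (a : X) : Prop :=
  Args a /\ forall b, Args b -> Att b a -> exists c, Args c /\ S c /\ Att c b.

(* grounded extension = least fixed point of the characteristic function *)
Definition grounded (a : X) : Prop :=
  forall S : X -> Prop, (forall x, defended S x -> S x) -> S a.
End Grounded.

Definition holds_in (w : {set A}) (t : tree) : Prop :=
  forall l, inSupport (LAtom l) t -> l \in w.

Definition Args_w (w : {set A}) (t : tree) : Prop := isArg t /\ holds_in w t.
Definition Att_w (w : {set A}) (t1 t2 : tree) : Prop :=
  attacks t1 t2 /\ Args_w w t1 /\ Args_w w t2.

Definition in_G (w : {set A}) (t : tree) : Prop := grounded (Args_w w) (Att_w w) t.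

Definition probG_arg (t : tree) : R :=
  \sum_(w : {set A} | (w \subset Fs) && `[< in_G w t >]) Pw w.

Definition probG_query (q : A) : R :=
  \sum_(w : {set A} | (w \subset Fs) && `[< exists t, in_G w t /\ label t = LAtom q >]) Pw w.

Definition has_claim (q : A) (t : tree) : bool :=
  if label t is LAtom a then a == q else false.

End ProbLogABA.

From HB Require Import structures.
From mathcomp Require Import all_boot all_order all_algebra.
From mathcomp Require Import boolp.
From Stdlib Require List.
Set Implicit Arguments. Unset Strict Implicit. Unset Printing Implicit Defensive.
Import Order.TTheory GRing.Theory Num.Theory.
Local Open Scope ring_scope.

(* Both sides of (1) are sums of P(w) over the worlds w \subseteq F, so it is
   enough to show, world by world, that q is well-founded true in F_w u R iff
   some grounded argument of AAF_w claims q.  The bridge is the notion of a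
   tree "supported relative to I": an argument of w whose negative assumptions
   [not b] all have b \notin I.  Such trees are exactly the derivations of the
   Gelfond-Lifschitz reduct, i.e. their claims are exactly gl(I)
   ([supported_gl], [gl_supported]).  Since gl is antitone, the well-founded
   true atoms W form the least prefixpoint of gl \o gl ([wf_true_least],
   [wf_true_prefix]).  Then: the arguments supported relative to gl(W) are
   closed under defence, so grounded claims lie in gl(gl W) \subseteq W
   ([grounded_wf]); and the claims of grounded arguments form a prefixpoint of
   gl \o gl, hence contain W ([wf_grounded]).  Part (2) then follows from a
   finite union bound ([sum_cover_le]), as every grounded argument is one of
   the listed arguments. *)

Lemma all_In (T : Type) (f : pred T) (s : seq T) :
  all f s <-> (forall x, List.In x s -> f x).
Proof.
elim: s => [|y s IH] //=; split.
- by case/andP=> fy /IH fs x [<-|/fs].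
- move=> H; rewrite H /=; last by left.
  by apply/IH => x Hx; apply: H; right.
Qed.

Lemma In_has (T : Type) (f : pred T) (s : seq T) x :
  List.In x s -> f x -> has f s.
Proof. by elim: s => [|y s IH] //= [<-|/IH H] fx; rewrite ?fx ?H ?orbT. Qed.

Lemma In_flatten_map (T U : Type) (f : T -> seq U) (s : seq T) x :
  List.In x (flatten (map f s)) <-> exists2 c, List.In c s & List.In x (f c).
Proof.
elim: s => [|c s IH] /=; first by split=> // -[].
rewrite List.in_app_iff IH; split.
- by case=> [Hx|[c' Hc' Hx]]; [exists c; first left|exists c'; first right].
- by case=> c' [<-|Hc'] Hx; [left|right; exists c'].
Qed.

Lemma map_eq_In (T U V : Type) (f : T -> V) (g : U -> V) s1 s2 y :
  map f s1 = map g s2 -> List.In y s2 -> exists2 x, List.In x s1 & f x = g y.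
Proof.
elim: s1 s2 => [|x s1 IH] [|y' s2] //= [E1 E2] [<-|/(IH _ E2) [x' Hx' E]].
- by exists x; first left.
- by exists x'; first right.
Qed.

Lemma map_exists (T U V : Type) (f : U -> V) (g : T -> V) (Q : U -> Prop) (s : seq T) :
  (forall x, List.In x s -> exists2 y, Q y & f y = g x) ->
  exists2 ys, map f ys = map g s & forall y, List.In y ys -> Q y.
Proof.
elim: s => [|x s IH] H; first by exists [::].
have [y Qy Ey] := H x (or_introl erefl).
have [ys Eys Qys] := IH (fun x' Hx' => H x' (or_intror Hx')).
by exists (y :: ys) => [|y' [<-|/Qys]] //=; rewrite Ey Eys.
Qed.


Fixpoint tree_nested_ind (A : finType) (P : tree A -> Prop)
  (H : forall l ch, (forall c, List.In c ch -> P c) -> P (Tnode l ch))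
  (t : tree A) : P t :=
  match t with
  | Tnode l ch => H l ch
      ((fix go (s : seq (tree A)) : forall c, List.In c s -> P c :=
          match s with
          | [::] => fun c (hc : List.In c [::]) => False_ind _ hc
          | x :: s' => fun c hc =>
              match hc with
              | or_introl e => @eq_ind (tree A) x P (tree_nested_ind H x) c e
              | or_intror h => go s' c h
              end
          end) ch)
  end.

Lemma In_leaves_node (A : finType) (l : lit A) ch x : ch <> [::] ->
  List.In x (leaves (Tnode l ch)) <-> exists2 c, List.In c ch & List.In x (leaves c).
Proof. by case: ch => // c ch _; apply: In_flatten_map. Qed.

Section ArgumentTrees.
Variables (A : finType) (Rr : seq (rule A)) (Fs : {set A}).

Definition body_labels (r : rule A) : seq (lit A) :=
  if rbody r is [::] then [:: LTrue A] else map (@blit_lit A) (rbody r).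

Lemma body_labels_children ch r : map (@label A) ch = body_labels r -> ch <> [::].
Proof. by move=> + E; rewrite E /body_labels; case: (rbody r). Qed.

Lemma validE l ch : valid Rr Fs (Tnode l ch) <->
  (ch = [::] /\ (l = LTrue A \/ isAssm Rr Fs l))
  \/ (exists r, List.In r Rr /\ l = LAtom (rhead r) /\
        map (@label A) ch = body_labels r /\
        (forall c, List.In c ch -> valid Rr Fs c)).
Proof.
have allvE (s : seq (tree A)) :
    (fix allv (s : seq (tree A)) : Prop :=
       match s with [::] => True | c :: s' => valid Rr Fs c /\ allv s' end) s
    <-> (forall c, List.In c s -> valid Rr Fs c).
  elim: s => [|x s IH] /=; first by [].
  rewrite IH; split=> [[Hx Hs] c [<-|/Hs]|H] //.
  by split=> [|c Hc]; apply: H; [left|right].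
by split=> -[H|[r [Hr [El [Ech Hch]]]]]; [left|right; exists r; rewrite -allvE|
  left|right; exists r; rewrite allvE].
Qed.

Lemma valid_leaves t : valid Rr Fs t ->
  forall x, List.In x (leaves t) -> x = LTrue A \/ isAssm Rr Fs x.
Proof.
elim/tree_nested_ind: t => l ch IH /validE [[-> Hl] x [<-|]//|].
move=> [r [_ [_ [/body_labels_children Hne Hch]]]] x.
by case/(In_leaves_node _ _ Hne) => c Hc; apply: IH (Hch c Hc) x.
Qed.

(* No argument claims chi: chi heads no rule and is not an assumption. *)
Lemma valid_notchi t : valid Rr Fs t -> label t <> LChi A.
Proof. by case: t => l ch /validE [[_ [->|]]|[r [_ [-> _]]]] // H /= E; rewrite E in H. Qed.

End ArgumentTrees.

Section LeastPrefixpoint.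
Variables (T : finType) (F : {set T} -> {set T}).

Lemma bigcap_prefix_least X :
  F X \subset X -> \bigcap_(Y | F Y \subset Y) Y \subset X.
Proof. by move=> HX; apply/subsetP => a /bigcapP; apply. Qed.

Hypothesis F_mono : forall X Y : {set T}, X \subset Y -> F X \subset F Y.

Lemma bigcap_prefix_closed :
  F (\bigcap_(Y | F Y \subset Y) Y) \subset \bigcap_(Y | F Y \subset Y) Y.
Proof.
apply/subsetP => a Ha; apply/bigcapP => X HX.
exact: subsetP HX a (subsetP (F_mono (bigcap_prefix_least HX)) a Ha).
Qed.
End LeastPrefixpoint.

Section Reduct.
Variables (A : finType) (L : seq (rule A)).

Lemma gl_closed_anti (I J X : {set A}) :
  I \subset J -> gl_closed L I X -> gl_closed L J X.
Proof.
move=> HIJ; apply: sub_all => r /implyP Hr; apply/implyP => Hb; apply: Hr.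
apply: sub_all Hb => -[a|a] //=; apply: contra; exact: subsetP.
Qed.

Lemma gl_anti (I J : {set A}) : I \subset J -> gl L J \subset gl L I.
Proof.
move=> HIJ; apply/subsetP => a /bigcapP Ha; apply/bigcapP => X HX.
exact/Ha/(gl_closed_anti HIJ).
Qed.

Lemma gl2_mono (X Y : {set A}) : X \subset Y -> gl L (gl L X) \subset gl L (gl L Y).
Proof. by move=> HXY; apply/gl_anti/gl_anti. Qed.

Lemma wf_true_least (X : {set A}) : gl L (gl L X) \subset X -> wf_true L \subset X.
Proof. exact: (bigcap_prefix_least (F := fun X => gl L (gl L X))). Qed.

Lemma wf_true_prefix : gl L (gl L (wf_true L)) \subset wf_true L.
Proof. exact: (bigcap_prefix_closed gl2_mono). Qed.

End Reduct.

Section World.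
Variables (A : finType) (Rr : seq (rule A)) (Fs : {set A}) (w : {set A}).
Hypothesis w_sub : w \subset Fs.

Local Notation P := (prog_of Rr w).

Definition bsat (I X : {set A}) (b : blit A) : bool :=
  match b with BPos a => a \in X | BNeg a => a \notin I end.

Definition lsat (I X : {set A}) (l : lit A) : bool :=
  match l with LAtom a => a \in X | LNot b => b \notin I | _ => true end.

Lemma closed_rule I X r : gl_closed P I X -> List.In r Rr ->
  all (bsat I X) (rbody r) -> rhead r \in X.
Proof.
rewrite /gl_closed /prog_of all_cat => /andP[_ /all_In HR] /HR /implyP; apply.
Qed.

Lemma closed_fact I X l : gl_closed P I X -> l \in w -> l \in X.
Proof.
rewrite /gl_closed /prog_of all_cat all_map => /andP[/allP HF _] Hl.
by have := HF l; rewrite mem_enum => /(_ Hl).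
Qed.

(* An argument of the world w whose negative assumptions avoid I: exactly the
   derivations of the reduct of P by I. *)
Definition supported (I : {set A}) (t : tree A) : Prop :=
  [/\ valid Rr Fs t, holds_in Rr Fs w t &
      forall b, List.In (LNot b) (leaves t) -> b \notin I].

Lemma supported_child I l ch c :
  supported I (Tnode l ch) -> List.In c ch -> supported I c.
Proof.
move=> [Hv Hh Hn] Hc; have Hne : ch <> [::] by case: (ch) Hc.
have sub x : List.In x (leaves c) -> List.In x (leaves (Tnode l ch)).
  by move=> Hx; apply/(In_leaves_node _ _ Hne); exists c.
case/validE: Hv => [[Ech _]|[r [_ [_ [_ Hch]]]]]; first by rewrite Ech in Hne.
split; [exact: Hch|move=> a [/sub Ha Hassm]; exact: Hh|move=> b /sub; exact: Hn].
Qed.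

Lemma supported_sat I X t : supported I t -> gl_closed P I X -> lsat I X (label t).
Proof.
move=> + HX; elim/tree_nested_ind: t => l ch IH Hs.
have [Hv Hh Hn] := Hs; case/validE: Hv => [[Ech [->|Hl]]|[r [Hr [-> [Hlab _]]]]] //.
- case: l Hl Hh Hn {Hs IH} => //= [a|b] Ha Hh Hn; last by apply: Hn; rewrite Ech; left.
  by apply: (closed_fact HX); apply: Hh; rewrite Ech; split=> //; left.
- apply: (closed_rule HX Hr); apply/all_In => b Hb.
  move: Hlab; rewrite /body_labels; case E: (rbody r) Hb => [//|b0 bs] Hb Hlab.
  have [c Hc Elab] := map_eq_In Hlab Hb.
  by have := IH c Hc (supported_child Hs Hc); rewrite Elab; case: (b).
Qed.

Lemma supported_gl I t a : supported I t -> label t = LAtom a -> a \in gl P I.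
Proof.
by move=> Hs Hl; apply/bigcapP => X HX; have := supported_sat Hs HX; rewrite Hl.
Qed.

Lemma leaf_supported I l :
  l = LTrue A \/ isAssm Rr Fs l -> lsat I w l -> supported I (Tnode l [::]).
Proof.
move=> Hl Hsat; split; first by apply/validE; left.
- by move=> a [[Ea|[]] _]; rewrite Ea in Hsat.
- by move=> b [Eb|[]]; rewrite Eb in Hsat.
Qed.

Lemma node_supported I r ch : List.In r Rr -> map (@label A) ch = body_labels r ->
  (forall c, List.In c ch -> supported I c) -> supported I (Tnode (LAtom (rhead r)) ch).
Proof.
move=> Hr Hlab Hch; have Hne := body_labels_children Hlab.
split.
- by apply/validE; right; exists r; do 3!split=> //; move=> c /Hch [].
- by move=> a [/(In_leaves_node _ _ Hne) [c /Hch [_ Hh _] Ha] Hassm]; apply: Hh.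
- by move=> b /(In_leaves_node _ _ Hne) [c /Hch [_ _ Hn]]; apply: Hn.
Qed.

Lemma body_children I Y r : List.In r Rr -> all (bsat I Y) (rbody r) ->
  (forall a, a \in Y -> exists2 t, supported I t & label t = LAtom a) ->
  exists2 ch, map (@label A) ch = body_labels r & forall c, List.In c ch -> supported I c.
Proof.
move=> Hr /all_In Hb HY; rewrite /body_labels; case E: (rbody r) => [|b0 bs].
  by exists [:: Tnode (LTrue A) [::]] => // c [<-|[]]; apply: leaf_supported; [left|].
rewrite -E; apply: map_exists => -[a|a] Hin; have /= Hsat := Hb _ Hin; first exact: HY.
exists (Tnode (LNot a) [::]) => //; apply: leaf_supported; last exact: Hsat; right.
rewrite /= inE; apply/orP; right; apply: (In_has Hr); apply/orP; right.
by apply: (In_has Hin).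
Qed.

(* Completeness: the claims of supported trees form a reduct-closed set, so
   every atom of gl P I is such a claim. *)
Lemma gl_supported I a : a \in gl P I -> exists2 t, supported I t & label t = LAtom a.
Proof.
pose Y := [set a | `[< exists2 t, supported I t & label t = LAtom a >]].
have HY a' : a' \in Y -> exists2 t, supported I t & label t = LAtom a'.
  by rewrite inE => /asboolP.
suff /bigcapP HC : gl_closed P I Y by move=> /HC; apply: HY.
rewrite /gl_closed /prog_of all_cat all_map; apply/andP; split.
- apply/allP => l; rewrite mem_enum => Hl /=; rewrite inE; apply/asboolP.
  exists (Tnode (LAtom l) [::]) => //; apply: leaf_supported => //; right.
  exact: subsetP w_sub l Hl.
- apply/all_In => r Hr; apply/implyP => Hb; rewrite inE; apply/asboolP.
  have [ch Hlab Hch] := body_children Hr Hb HY.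
  by exists (Tnode (LAtom (rhead r)) ch); first exact: node_supported.
Qed.

End World.

Section GroundedFacts.
Variables (X : Type) (Args : X -> Prop) (Att : X -> X -> Prop).

Lemma grounded_args a : grounded Args Att a -> Args a.
Proof. by apply=> x []. Qed.

Lemma grounded_defended a : defended Args Att (grounded Args Att) a -> grounded Args Att a.
Proof.
move=> [Ha Hdef] S HS; apply: (HS); split=> // b Hb Hba.
have [c [Hc [Gc Hcb]]] := Hdef b Hb Hba.
by exists c; split=> //; split=> //; apply: Gc.
Qed.
End GroundedFacts.

Section GroundedWorld.
Variables (A : finType) (Rr : seq (rule A)) (Fs : {set A}) (w : {set A}).
Hypothesis w_sub : w \subset Fs.

Local Notation P := (prog_of Rr w).
Local Notation W := (wf_true (prog_of Rr w)).
Local Notation Args := (Args_w Rr Fs w).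
Local Notation Att := (Att_w Rr Fs w).
Local Notation supported := (supported Rr Fs w).

(* Facts are never attacked (nothing claims chi), so every attack targets a
   negative assumption of its victim, and conversely. *)
Lemma Att_w_inv t1 t2 : Att t1 t2 ->
  exists2 b, label t1 = LAtom b & List.In (LNot b) (leaves t2).
Proof.
move=> [[a [[Hin Ha] Hl]] [[[Hv1 _] _] _]].
case: a Hin Ha Hl => //= [a|b] Hin Ha Hl; last by exists b.
by case: (valid_notchi Hv1).
Qed.

Lemma Att_w_intro t1 t2 b : Args t1 -> Args t2 ->
  label t1 = LAtom b -> List.In (LNot b) (leaves t2) -> Att t1 t2.
Proof.
move=> H1 H2 Hl Hin; split=> //; exists (LNot b); split=> //; split=> //.
by case: H2 => [[Hv _] _]; case: (valid_leaves Hv Hin).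
Qed.

Lemma supported_Args (I : {set A}) t a : supported I t -> label t = LAtom a -> Args t.
Proof. by move=> [Hv Hh _] Hl; split=> //; split=> //; rewrite Hl. Qed.

Lemma Args_supported (I : {set A}) t : Args t ->
  (forall b, List.In (LNot b) (leaves t) -> b \notin I) -> supported I t.
Proof. by move=> [[Hv _] Hh] Hn; split. Qed.

(* Claims of grounded arguments are well-founded true: the arguments whose
   negative assumptions avoid gl P W are closed under defence. *)
Lemma grounded_wf t a : in_G Rr Fs w t -> label t = LAtom a -> a \in W.
Proof.
move=> Gt Lt; pose U := gl P W.
pose S x := Args x /\ forall b, List.In (LNot b) (leaves x) -> b \notin U.
suff [Ht Hn] : S t.
  by apply: (subsetP (wf_true_prefix P)); apply: supported_gl Lt; apply: Args_supported.
apply: Gt => x [Hx Hdef]; split=> // b Hb; apply/negP => bU.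
have [t' St' Lt'] := gl_supported w_sub bU.
have At' := supported_Args St' Lt'.
have [c [Ac [[_ Sc] Hct']]] := Hdef t' At' (Att_w_intro At' Hx Lt' Hb).
have [d Lc Hd] := Att_w_inv Hct'.
have [_ _ /(_ d Hd) /negP] := St'; apply.
by apply: (subsetP (wf_true_prefix P)); apply: supported_gl Lc; apply: Args_supported.
Qed.

(* Conversely, the claims of grounded arguments form a prefixpoint of
   gl P \o gl P, hence contain W. *)
Lemma wf_grounded a : a \in W -> exists2 t, in_G Rr Fs w t & label t = LAtom a.
Proof.
pose X := [set a | `[< exists2 t, in_G Rr Fs w t & label t = LAtom a >]].
suff /wf_true_least sub : gl P (gl P X) \subset X.
  by move=> /(subsetP sub); rewrite inE => /asboolP.
apply/subsetP => x /(gl_supported w_sub) [t St Lt]; rewrite inE; apply/asboolP.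
exists t => //; apply: grounded_defended; split; first exact: supported_Args St Lt.
move=> b Ab Hbt; have [d Lb Hd] := Att_w_inv Hbt.
case: (pselect (exists2 c, List.In (LNot c) (leaves b) & c \in X)).
- move=> [c Hc]; rewrite inE => /asboolP [t' Gt' Lt'].
  have At' := grounded_args Gt'.
  by exists t'; split=> //; split=> //; apply: Att_w_intro Lt' Hc.
- move=> Hnone; have [_ _ /(_ d Hd) /negP] := St; case.
  apply: supported_gl Lb; apply: Args_supported => // c Hc.
  by apply/negP => cX; apply: Hnone; exists c.
Qed.

Lemma wf_models_grounded q :
  wf_models P q <-> exists t, in_G Rr Fs w t /\ label t = LAtom q.
Proof.
split=> [/wf_grounded [t Gt Lt]|[t [Gt Lt]]]; first by exists t.
exact: grounded_wf Gt Lt.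
Qed.

End GroundedWorld.

Lemma sum_cover_le (R : numDomainType) (I : finType) (T : Type) (s : seq T)
    (Q : pred T) (D G : pred I) (E : T -> pred I) (F : I -> R) :
  (forall i, D i -> 0 <= F i) ->
  (forall i, D i -> G i -> exists2 t, List.In t s & Q t && E t i) ->
  \sum_(i | D i && G i) F i <= \sum_(t <- s | Q t) \sum_(i | D i && E t i) F i.
Proof.
move=> F_ge0 cover; pose f t i := if D i && E t i then F i else 0.
have f_ge0 t i : 0 <= f t i by rewrite /f; case: ifP => // /andP[/F_ge0].
under [X in _ <= X]eq_bigr => t _ do rewrite big_mkcond /=.
rewrite exchange_big /= big_mkcond /=; apply: ler_sum => i _.
case: ifP => [/andP[Di Gi]|_]; last exact: sumr_ge0 (fun t _ => f_ge0 t i).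
have [t Ht /andP[Qt Et]] := cover i Di Gi.
elim: s {cover} Ht => [|y s IH] //= [Ey|/IH le_sum]; rewrite big_cons.
- have fti : f t i = F i by rewrite /f Di Et.
  by rewrite Ey Qt -/(f t i) fti lerDl; exact: sumr_ge0 (fun j _ => f_ge0 j i).
- by case: ifP => // _; apply: ler_wpDl (f_ge0 y i) le_sum.
Qed.

Lemma Pw_ge0 (R : realFieldType) (A : finType) (Fs : {set A}) (p : A -> R)
    (w : {set A}) :
  (forall l, l \in Fs -> 0 <= p l <= 1) -> w \subset Fs -> 0 <= Pw Fs p w.
Proof.
move=> Hp w_sub; apply: mulr_ge0; apply: prodr_ge0 => l.
- by move=> /(subsetP w_sub) /Hp /andP[].
- by rewrite inE => /andP[_ /Hp /andP[_]]; rewrite subr_ge0.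
Qed.

Theorem mainTheorem1 (R : realFieldType) (A : finType)
  (Rr : seq (rule A)) (Fs : {set A}) (p : A -> R)
  (Hp : forall l, l \in Fs -> 0 <= p l <= 1)
  (Hhead : forall r, List.In r Rr -> rhead r \notin Fs)
  (args : seq (tree A)) (Hnodup : List.NoDup args)
  (Hargs : forall t, isArg Rr Fs t <-> List.In t args)
  (q : A) :
  succ_prob Rr Fs p q = probG_query Rr Fs p q /\
  succ_prob Rr Fs p q <= \sum_(t <- args | has_claim q t) probG_arg Rr Fs p t.
Proof.
have succ_eq : succ_prob Rr Fs p q = probG_query Rr Fs p q.
  apply: eq_bigl => w; apply: andb_id2l => w_sub.
  by apply/idP/asboolP => /(wf_models_grounded Rr w_sub).
split=> //; rewrite succ_eq; apply: sum_cover_le => [w|w w_sub].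
  exact: Pw_ge0.
move=> /asboolP [t [Gt Lt]]; exists t.
  by apply/Hargs; case: (grounded_args Gt).
by rewrite /has_claim Lt eqxx; apply/asboolP.
Qed.
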